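(* Let $R$ be a commutative ring with $1\neq 0$, $S\subseteq R$ a multiplicatively closed subset, and $M$ an $S$-comultiplication $R$-module. If $N$ is an $S$-copure submodule of $M$, then $M/N$ is an $S$-comultiplication $R$-module.
   Context: All rings are commutative with $1\neq 0$ and all modules are unital. A multiplicatively closed subset (m.c.s.) $S$ of $R$ is a subset with $0\notin S$, $1\in S$, and $ss'\in S$ for all $s,s'\in S$. For an ideal $I$ and submodule $L$, $(L:_M I)=\{m\in M: Im\subseteq L\}$ and $(0:_M I)=\{m\in M: Im=0\}$. $M$ is an $S$-comultiplication module if for each submodule $N$ of $M$ there exist $s\in S$ and an ideal $I$ of $R$ with $s(0:_M I)\subseteq N\subseteq (0:_M I)$. A submodule $L$ of $M$ is $S$-copure if there exists $s\in S$ such that $s(L:_M I)\subseteq L+(0:_M I)$ for every ideal $I$ of $R$. *)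

From HB Require Import structures.
From mathcomp Require Import all_boot all_order all_algebra.
Set Implicit Arguments. Unset Strict Implicit. Unset Printing Implicit Defensive.
Import GRing.Theory.
Local Open Scope ring_scope.

Definition is_submodule (R : comNzRingType) (M : lmodType R) (N : M -> Prop) :=
  [/\ N 0, (forall x y, N x -> N y -> N (x + y)) & (forall (r : R) x, N x -> N (r *: x))].

Definition is_ideal (R : comNzRingType) (I : R -> Prop) :=
  [/\ I 0, (forall x y, I x -> I y -> I (x + y)) & (forall r x, I x -> I (r * x))].

Definition mcs (R : comNzRingType) (S : R -> Prop) :=
  [/\ ~ S 0, S 1 & (forall s t, S s -> S t -> S (s * t))].

Definition ann (R : comNzRingType) (M : lmodType R) (I : R -> Prop) : M -> Prop :=
  fun m => forall r, I r -> r *: m = 0.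

Definition colon (R : comNzRingType) (M : lmodType R) (L : M -> Prop) (I : R -> Prop)
  : M -> Prop := fun m => forall r, I r -> L (r *: m).

Definition subsum (R : comNzRingType) (M : lmodType R) (L K : M -> Prop) : M -> Prop :=
  fun m => exists a b, [/\ L a, K b & m = a + b].

Definition S_comultiplication (R : comNzRingType) (M : lmodType R) (S : R -> Prop) :=
  forall N : M -> Prop, is_submodule N ->
    exists s, S s /\ exists I : R -> Prop, [/\ is_ideal I,
      (forall m, ann I m -> N (s *: m)) & (forall m, N m -> ann I m)].

Definition S_copure (R : comNzRingType) (M : lmodType R) (S : R -> Prop) (L : M -> Prop) :=
  exists s, S s /\ forall I : R -> Prop, is_ideal I ->
    forall m, colon L I m -> subsum L (ann I) (s *: m).

From HB Require Import structures.
From mathcomp Require Import all_boot all_order all_algebra.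
Set Implicit Arguments. Unset Strict Implicit. Unset Printing Implicit Defensive.
Import GRing.Theory.
Local Open Scope ring_scope.

(* The quotient M/N is presented by a surjective linear map f : M -> Q with
   kernel N.  Given a submodule K of Q, its preimage f^-1(K) is a submodule of
   M, so the comultiplication property of M yields s in S and an ideal I with
   s (0 :_M I) <= f^-1(K) <= (0 :_M I).  Pushing forward along f:
   - the inclusion K <= (0 :_Q I) holds because f maps (0 :_M I) into
     (0 :_Q I) and f is surjective;
   - if f m lies in (0 :_Q I), then m lies in (N :_M I), so copureness (with
     constant t in S) gives t m = a + b with a in N and b in (0 :_M I); hence
     t (f m) = f b and (s t) (f m) = f (s b) lies in K.
   So s t and I witness the comultiplication condition for K. *)

Section LinearMapFacts.
Variables (R : comNzRingType) (M Q : lmodType R) (f : {linear M -> Q}).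

Lemma preimage_submodule (K : Q -> Prop) :
  is_submodule K -> is_submodule (fun m => K (f m)).
Proof.
move=> [K0 KD KZ]; split; first by rewrite linear0.
- by move=> x y Kx Ky; rewrite linearD; apply: KD.
- by move=> r x Kx; rewrite linearZ; apply: KZ.
Qed.

Lemma ann_linear (I : R -> Prop) (m : M) : ann I m -> ann I (f m).
Proof. by move=> annm r Ir; rewrite -linearZ (annm r Ir) linear0. Qed.

Variable N : M -> Prop.
Hypothesis kerfN : forall m : M, f m = 0 <-> N m.

Lemma colon_of_ann_image (I : R -> Prop) (m : M) :
  ann I (f m) -> colon N I m.
Proof. by move=> annfm r Ir; apply/kerfN; rewrite linearZ_LR (annfm r Ir). Qed.

Lemma copure_image_ann (S : R -> Prop) :
  S_copure S N -> exists t, S t /\ forall I : R -> Prop, is_ideal I ->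
    forall m, ann I (f m) -> exists b, ann I b /\ t *: f m = f b.
Proof.
move=> [t [St copure]]; exists t; split => // I idI m annfm.
have [a [b [Na annb tm_ab]]] := copure I idI m (colon_of_ann_image annfm).
exists b; split => //.
have fa0 : f a = 0 by apply/kerfN.
by rewrite -linearZ tm_ab linearD fa0 add0r.
Qed.

End LinearMapFacts.

Theorem theorem3p4 (R : comNzRingType) (S : R -> Prop) (M : lmodType R)
  (N : M -> Prop) (Q : lmodType R) (f : {linear M -> Q}) :
  mcs S -> S_comultiplication M S -> is_submodule N -> S_copure S N ->
  (forall q : Q, exists m : M, f m = q) ->
  (forall m : M, f m = 0 <-> N m) ->
  S_comultiplication Q S.
Proof.
move=> [_ _ SM] comultM _ copureN surjf kerfN K subK.
have [t [St tann]] := copure_image_ann kerfN copureN.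
have [s [Ss [I [idI annK Kann]]]] := comultM _ (preimage_submodule f subK).
exists (s * t); split; first exact: SM.
exists I; split => // q; have [m <-] := surjf q.
- move=> annfm; have [b [annb tfm]] := tann I idI m annfm.
  by rewrite -scalerA tfm -linearZ; apply: annK.
- by move/Kann; apply: ann_linear.
Qed.
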